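(* Let $0<\epsilon<1/3$. Suppose $G=(U\cup V,E)$ is a bipartite graph and $H=n\otimes G$ where $n=\max\{|U|,|V|\}$. If $H$ has an $\epsilon$-regular partition of size $t$, then $G$ has a $36\epsilon^{1/18}$-regular partition of size at most $2t+2$.
   Context: For a bipartite graph $G=(U\cup V,E)$ and $n\ge1$, $n\otimes G$ is the $3$-graph with vertex set $U\cup V\cup\{c_1,\dots,c_n\}$ ($c_i$ new vertices) and edge set $\{\{c_i,u,w\}: i\in[n], uw\in E\}$. Graph regularity: $d_G(X,Y)=|\{(x,y)\in X\times Y:xy\in E\}|/(|X||Y|)$; $(X,Y)$ is $\eta$-regular if $|d_G(X,Y)-d_G(X',Y')|\le\eta$ for all $X'\subseteq X,Y'\subseteq Y$ with $|X'|\ge\eta|X|,|Y'|\ge\eta|Y|$; a partition $\mathcal P$ of $V(G)$ (not necessarily equitable; pairs $(X,X)$ allowed) is $\eta$-regular if at least $(1-\eta)|V(G)|^2$ pairs of $V(G)^2$ lie in $X\times Y$ for some $\eta$-regular $(X,Y)\in\mathcal P^2$. $3$-graph regularity: $d_H(X,Y,Z)=|\{(x,y,z)\in X\times Y\times Z:\{x,y,z\}\in E(H)\}|/(|X||Y||Z|)$; $(X,Y,Z)$ is $\epsilon$-regular if $|d_H(X,Y,Z)-d_H(X',Y',Z')|\le\epsilon$ for all subsets of sizes at least $\epsilon|X|,\epsilon|Y|,\epsilon|Z|$; a partition $\mathcal P$ of $V(H)$ is $\epsilon$-regular if at least $(1-\epsilon)|V(H)|^3$ triples of $V(H)^3$ lie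 in $X\times Y\times Z$ for some $\epsilon$-regular $(X,Y,Z)\in\mathcal P^3$. *)

From HB Require Import structures.
From mathcomp Require Import all_boot all_order all_algebra.
From mathcomp Require Import reals exp.
Set Implicit Arguments. Unset Strict Implicit. Unset Printing Implicit Defensive.
Import Order.TTheory GRing.Theory Num.Theory.
Local Open Scope ring_scope.

Definition bipartite (T : finType) (U V : {set T}) (e : rel T) : Prop :=
  [disjoint U & V] /\ U :|: V = [set: T] /\
  (forall x y, e x y = e y x) /\
  (forall x y, e x y -> (x \in U /\ y \in V) \/ (x \in V /\ y \in U)).

Definition dens2 {R : realType} (T : finType) (e : rel T) (X Y : {set T}) : R :=
  #|[set p in setX X Y | e p.1 p.2]|%:R / (#|X| * #|Y|)%:R.

Definition reg2 {R : realType} (T : finType) (e : rel T) (eta : R) (X Y : {set T}) : bool :=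
  [forall X' : {set T}, forall Y' : {set T},
    [&& X' \subset X, Y' \subset Y, eta * #|X|%:R <= #|X'|%:R & eta * #|Y|%:R <= #|Y'|%:R]
    ==> (`|dens2 e X Y - dens2 e X' Y'| <= eta)].

Definition reg_partition2 {R : realType} (T : finType) (e : rel T) (eta : R)
    (P : {set {set T}}) : Prop :=
  partition P [set: T] /\
  (1 - eta) * (#|T| ^ 2)%:R <=
    #|[set p : T * T | [exists X in P, exists Y in P,
         [&& reg2 e eta X Y, p.1 \in X & p.2 \in Y]]]|%:R.

Definition dens3 {R : realType} (W : finType) (Eh : {set {set W}}) (X Y Z : {set W}) : R :=
  #|[set p : W * W * W | [&& p.1.1 \in X, p.1.2 \in Y, p.2 \in Z &
        [set p.1.1; p.1.2; p.2] \in Eh]]|%:R / (#|X| * #|Y| * #|Z|)%:R.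

Definition reg3 {R : realType} (W : finType) (Eh : {set {set W}}) (eps : R)
    (X Y Z : {set W}) : bool :=
  [forall X' : {set W}, forall Y' : {set W}, forall Z' : {set W},
    [&& X' \subset X, Y' \subset Y, Z' \subset Z,
        eps * #|X|%:R <= #|X'|%:R, eps * #|Y|%:R <= #|Y'|%:R &
        eps * #|Z|%:R <= #|Z'|%:R]
    ==> (`|dens3 Eh X Y Z - dens3 Eh X' Y' Z'| <= eps)].

Definition reg_partition3 {R : realType} (W : finType) (Eh : {set {set W}}) (eps : R)
    (P : {set {set W}}) : Prop :=
  partition P [set: W] /\
  (1 - eps) * (#|W| ^ 3)%:R <=
    #|[set p : W * W * W | [exists X in P, exists Y in P, exists Z in P,
         [&& reg3 Eh eps X Y Z, p.1.1 \in X, p.1.2 \in Y & p.2 \in Z]]]|%:R.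

(* n ⊗ G : vertex set T + {c_0,...,c_{n-1}}, edges {c_i, u, w} for uw ∈ E *)
Definition tensor_edges (T : finType) (e : rel T) (n : nat) : {set {set (T + 'I_n)}} :=
  (fun p : 'I_n * (T * T) => [set inr p.1; inl p.2.1; inl p.2.2])
    @: [set p : 'I_n * (T * T) | e p.2.1 p.2.2].

From HB Require Import structures.
From mathcomp Require Import all_boot all_order all_algebra.
From mathcomp Require Import reals exp.
From mathcomp Require Import zify ring lra.
Import Order.TTheory GRing.Theory Num.Theory.
Local Open Scope ring_scope.

(* Q is the partition of V(G) into the traces X ∩ V(G) of the parts X of P.
   Since d_H(X', Y', Z') = d_G(X', Y') for X', Y' ⊆ V(G) and any nonempty set
   Z' of centres, an eps-regular triple (X, Y, Z) of P in which X and Y have an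
   s-fraction (s = eps^(1/18)) of their vertices in V(G) and Z an eps-fraction
   of centres induces a 36s-regular pair of traces (X ∩ V(G), Y ∩ V(G)).
   Hence (x, y) can miss the regular pairs of Q only if the part of x or of y
   meets V(G) in a small fraction (at most 2s|V(H)||V(G)| pairs), or if
   (x, y, z) lies in no regular triple for any centre z whose part has many
   centres; such centres number at least n/2, and irregular triples at most
   eps|V(H)|^3, so there are at most 32 eps |V(G)|^2 pairs of the second kind. *)

Definition preimset_partition {A B : finType} (f : A -> B) (P : {set {set B}}) :
    {set {set A}} :=
  [set f @^-1: X | X : {set B} in P] :\ set0.

Lemma preimset_pblock_partition {A B : finType} (f : A -> B) {P : {set {set B}}} :
  partition P [set: B] -> forall a, f @^-1: pblock P (f a) \in preimset_partition f P.
Proof.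
move=> /cover_partition P_cover a; rewrite !inE imset_f ?pblock_mem ?P_cover ?inE // andbT.
by apply/set0Pn; exists a; rewrite inE mem_pblock P_cover inE.
Qed.

Lemma partition_preimset_partition {A B : finType} (f : A -> B) {P : {set {set B}}} :
  partition P [set: B] -> partition (preimset_partition f P) [set: A].
Proof.
move=> P_part; have P_cover := cover_partition P_part.
apply/and3P; split; last by rewrite !inE eqxx.
- apply/eqP/setP => a; rewrite inE; apply/bigcupP; exists (f @^-1: pblock P (f a)).
    exact: preimset_pblock_partition.
  by rewrite inE mem_pblock P_cover inE.
- apply/trivIsetP => C D; rewrite !inE => /andP[_ /imsetP[X XP ->]] /andP[_ /imsetP[Y YP ->]] neqXY.
  have /(trivIsetP (partition_trivIset P_part)) dXY : X != Y by apply: contraNneq neqXY => ->.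
  by move: (dXY XP YP); rewrite -!setI_eq0 -preimsetI => /eqP->; rewrite preimset0.
Qed.

Lemma card_preimset_partition {A B : finType} (f : A -> B) (P : {set {set B}}) :
  (#|preimset_partition f P| <= #|P|)%N.
Proof. exact: leq_trans (subset_leq_card (subD1set _ _)) (leq_imset_card _ _). Qed.

Definition large_trace {R : numDomainType} {A W : finType} (P : {set {set W}})
    (h : A -> W) (c : R) (a : A) : bool :=
  c * #|pblock P (h a)|%:R <= #|h @^-1: pblock P (h a)|%:R.

Lemma card_small_trace (R : realDomainType) (A W : finType) (P : {set {set W}})
    (h : A -> W) (c : R) :
  partition P [set: W] -> 0 <= c ->
  #|[set a | ~~ large_trace P h c a]|%:R <= c * #|W|%:R.
Proof.
move=> P_part c_ge0; have P_cover := cover_partition P_part.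
pose small (X : {set W}) := #|h @^-1: X|%:R < c * #|X|%:R.
have small_cover : [set a | ~~ large_trace P h c a] \subset
    \bigcup_(X in P | small X) h @^-1: X.
  apply/subsetP => a; rewrite inE /large_trace -ltNge => small_a.
  apply/bigcupP; exists (pblock P (h a)); last by rewrite inE mem_pblock P_cover inE.
  by rewrite /small small_a pblock_mem ?P_cover ?inE.
apply: le_trans (_ : \sum_(X in P | small X) #|h @^-1: X|%:R <= _).
  rewrite -natr_sum ler_nat.
  by apply: leq_trans (subset_leq_card small_cover) _; apply: unstable.card_big_setU.
apply: le_trans (_ : \sum_(X in P) c * #|X|%:R <= _); last first.
  by rewrite -mulr_sumr -natr_sum -(card_partition P_part) cardsT.
rewrite [leRHS](bigID small) /= -[leLHS]addr0 lerD //; last first.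
  by apply: sumr_ge0 => X _; rewrite mulr_ge0.
by apply: ler_sum => X /andP[_ /ltW].
Qed.

Lemma sym_rel_seq2 {T : eqType} {e : rel T} {x y u w : T} :
  symmetric e -> [:: x; y] =i [:: u; w] -> e x y = e u w.
Proof.
move=> e_sym xy_uw.
have := xy_uw x; have := xy_uw y; have := xy_uw u; have := xy_uw w.
rewrite !inE !eqxx ?orbT /= => w_xy u_xy /esym y_uw /esym x_uw.
move: u_xy w_xy; case/orP: x_uw => /eqP->; case/orP: y_uw => /eqP->.
all: rewrite ?eqxx ?orbb ?orbT //=.
- by move=> _ /eqP->.
- by move=> /eqP->.
Qed.

Section Tensor.
Variables (R : realType) (T : finType) (e : rel T) (n : nat).
Hypothesis e_sym : symmetric e.
Local Notation W := (T + 'I_n)%type.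

Lemma tensor_edgesE x y i :
  ([set inl x; inl y; inr i] \in tensor_edges e n) = e x y.
Proof.
have inlE (a b c : T) (k : 'I_n) :
    (inl a \in [set inl b; inl c; inr k]) = (a \in [:: b; c]).
  by rewrite !inE !(inj_eq inl_inj) (_ : inl a == inr k = false) ?orbF.
apply/imsetP/idP => [[[j [u w]]] /[!inE] /= e_uw E | e_xy]; last first.
  exists (i, (x, y)); first by rewrite inE.
  by apply/setP => a; rewrite !inE orbC orbA.
have {}E : [set inl x; inl y; inr i] = [set inl u; inl w; inr j] :> {set W}.
  by rewrite E; apply/setP => a; rewrite !inE -orbA orbC.
have mem_uw v : (v \in [:: x; y]) = (v \in [:: u; w]) by rewrite -(inlE _ _ _ i) E inlE.
by rewrite (sym_rel_seq2 e_sym mem_uw).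
Qed.

Let triple (q : T * T * 'I_n) : W * W * W := (inl q.1.1, inl q.1.2, inr q.2).

Let triple_inj : injective triple.
Proof. by move=> [[a b] c] [[a' b'] c'] [] -> -> ->. Qed.

Lemma dens3_tensor (X Y : {set T}) (Z : {set 'I_n}) : Z != set0 ->
  dens3 (R := R) (tensor_edges e n) (inl @: X) (inl @: Y) (inr @: Z) = dens2 e X Y.
Proof.
move=> Z_neq0; rewrite /dens3 /dens2 !(card_imset _ inl_inj) (card_imset _ inr_inj).
set S := [set p : W * W * W | _].
have -> : S = triple @: setX [set p in setX X Y | e p.1 p.2] Z.
  apply/setP => [[[a b] c]]; rewrite !inE /=; apply/idP/idP.
    case/and4P => /imsetP[x xX ->] /imsetP[y yY ->] /imsetP[z zZ ->].
    rewrite tensor_edgesE => e_xy; apply/imsetP; exists (x, y, z) => //.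
    by rewrite !inE /= xX yY e_xy zZ.
  case/imsetP => [[[x y] z]]; rewrite !inE /= => /andP[/andP[/andP[xX yY] e_xy] zZ] [-> -> ->].
  by rewrite !imset_f // tensor_edgesE.
rewrite card_imset // cardsX !natrM invfM mulrACA divff ?mulr1 //.
by rewrite pnatr_eq0 -lt0n card_gt0.
Qed.

Lemma reg3_dens2_close {eps : R} {X Y Z : {set W}} :
  reg3 (tensor_edges e n) eps X Y Z -> forall X' Y' : {set T},
  X' \subset inl @^-1: X -> Y' \subset inl @^-1: Y ->
  eps * #|X|%:R <= #|X'|%:R -> eps * #|Y|%:R <= #|Y'|%:R ->
  eps * #|Z|%:R <= #|inr @^-1: Z|%:R -> inr @^-1: Z != set0 ->
  `|dens3 (tensor_edges e n) X Y Z - dens2 e X' Y'| <= eps.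
Proof.
move=> reg_XYZ X' Y' sX sY large_X' large_Y' large_Z Z_neq0.
rewrite -(dens3_tensor _ _ _ Z_neq0).
move/forallP/(_ (inl @: X'))/forallP/(_ (inl @: Y'))/forallP/(_ (inr @: (inr @^-1: Z))): reg_XYZ.
move/implyP; apply.
by rewrite !(card_imset _ inl_inj) (card_imset _ inr_inj) !sub_imset_pre subxx sX sY
  large_X' large_Y' large_Z.
Qed.

Lemma reg2_preimset_of_reg3 (eps eta delta : R) (X Y Z : {set W}) :
  0 <= eps -> eps <= delta -> eps <= eta * delta -> 2 * eps <= eta ->
  reg3 (tensor_edges e n) eps X Y Z ->
  delta * #|X|%:R <= #|inl @^-1: X|%:R -> delta * #|Y|%:R <= #|inl @^-1: Y|%:R ->
  eps * #|Z|%:R <= #|inr @^-1: Z|%:R -> inr @^-1: Z != set0 ->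
  reg2 e eta (inl @^-1: X) (inl @^-1: Y).
Proof.
move=> eps_ge0 eps_delta eps_eta_delta eps_eta reg_XYZ large_X large_Y large_Z Z_neq0.
have eta_ge0 : 0 <= eta by lra.
have close := reg3_dens2_close reg_XYZ.
have large_eps (D : {set W}) (D' : {set T}) : delta * #|D|%:R <= #|inl @^-1: D|%:R ->
    eta * #|inl @^-1: D|%:R <= #|D'|%:R -> eps * #|D|%:R <= #|D'|%:R.
  move=> large_D large_D'; apply: le_trans large_D'.
  apply: le_trans (_ : eta * (delta * #|D|%:R) <= _); last by rewrite ler_wpM2l.
  by rewrite mulrA ler_wpM2r.
have := close _ _ (subxx _) (subxx _)
  (le_trans (ler_wpM2r (ler0n _ _) eps_delta) large_X)
  (le_trans (ler_wpM2r (ler0n _ _) eps_delta) large_Y) large_Z Z_neq0.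
rewrite ler_norml => /andP[lo_XY hi_XY].
apply/forallP => X'; apply/forallP => Y'; apply/implyP => /and4P[sX sY large_X' large_Y'].
have := close _ _ sX sY (large_eps _ _ large_X large_X')
  (large_eps _ _ large_Y large_Y') large_Z Z_neq0.
rewrite ler_norml => /andP[lo hi].
rewrite ler_norml; apply/andP; split; lra.
Qed.

Section TracePartition.
Variables (P : {set {set W}}) (eps s : R).
Hypothesis P_reg : reg_partition3 (tensor_edges e n) eps P.
Hypotheses (eps_gt0 : 0 < eps) (s_gt0 : 0 < s) (eps_s : eps <= s ^+ 2) (s_small : 36 * s < 1).
Hypotheses (n_gt0 : (0 < n)%N) (n_le_T : (n <= #|T|)%N) (T_le_2n : (#|T| <= 2 * n)%N).

Local Notation Q := (preimset_partition inl P).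
Local Notation regular_triples := [set p : W * W * W | [exists X in P, exists Y in P,
  exists Z in P, [&& reg3 (tensor_edges e n) eps X Y Z, p.1.1 \in X, p.1.2 \in Y & p.2 \in Z]]].
Local Notation regular_pairs := [set p : T * T | [exists X in Q, exists Y in Q,
  [&& reg2 e (36 * s) X Y, p.1 \in X & p.2 \in Y]]].
Local Notation small_trace_vertices := [set x | ~~ large_trace P inl s x].
Local Notation large_trace_centres := [set z | large_trace P inr eps z].
Local Notation unwitnessed_pairs := [set p : T * T | [forall z in large_trace_centres,
  (inl p.1, inl p.2, inr z) \notin regular_triples]].

Let P_part : partition P [set: W] := P_reg.1.

Let eps_le_s : eps <= s.
Proof. by apply: le_trans eps_s _; rewrite expr2 ler_piMr ?ltW //; move: s_small s_gt0; lra. Qed.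

Let eps_le_s2 : eps <= 36 * s * s.
Proof. by move: eps_s (mulr_gt0 s_gt0 s_gt0); rewrite expr2 -mulrA; lra. Qed.

Lemma regular_pair_of_triple x y z :
  large_trace P inl s x -> large_trace P inl s y -> large_trace P inr eps z ->
  (inl x, inl y, inr z) \in regular_triples -> (x, y) \in regular_pairs.
Proof.
move=> large_x large_y large_z /[!inE] /existsP[X /andP[XP /existsP[Y /andP[YP
  /existsP[Z /andP[ZP /and4P[reg_XYZ xX yY zZ]]]]]]].
have P_triv := partition_trivIset P_part.
have X_def := def_pblock P_triv XP xX; have Y_def := def_pblock P_triv YP yY.
move: large_x large_y large_z.
rewrite /large_trace X_def Y_def (def_pblock P_triv ZP zZ) => large_X large_Y large_Z.
apply/existsP; exists (inl @^-1: X).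
rewrite -{1}X_def preimset_pblock_partition //=; apply/existsP; exists (inl @^-1: Y).
rewrite -{1}Y_def preimset_pblock_partition //= !inE xX yY !andbT.
apply: (reg2_preimset_of_reg3 eps (36 * s) s X Y Z) => //.
- exact: ltW.
- by move: eps_le_s s_gt0; lra.
- by apply/set0Pn; exists z; rewrite inE.
Qed.

Lemma leq_card_irregular_pairs :
  (#|~: regular_pairs| <= 2 * (#|small_trace_vertices| * #|T|) + #|unwitnessed_pairs|)%N.
Proof.
have irregular_cover : ~: regular_pairs \subset
    setX small_trace_vertices [set: T] :|: setX [set: T] small_trace_vertices :|: unwitnessed_pairs.
  apply/subsetP => -[x y]; rewrite in_setC => irregular_xy.
  rewrite !in_setU !in_setX !in_setT /= !andbT [x \in _]inE [y \in _]inE.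
  have [large_x|] := boolP (large_trace P inl s x); rewrite //=.
  have [large_y|] := boolP (large_trace P inl s y); rewrite ?orbT //=.
  rewrite inE; apply/forallP => z; apply/implyP; rewrite inE => large_z.
  by apply: contra irregular_xy; apply: regular_pair_of_triple.
apply: leq_trans (subset_leq_card irregular_cover) _.
apply: leq_trans (leq_card_setU _ _) _; rewrite leq_add2r.
apply: leq_trans (leq_card_setU _ _) _.
by rewrite !cardsX cardsT mulnC addnn -mul2n.
Qed.

Lemma leq_card_unwitnessed_pairs :
  (#|unwitnessed_pairs| * #|large_trace_centres| <= #|~: regular_triples|)%N.
Proof.
rewrite -cardsX -(card_imset _ triple_inj); apply: subset_leq_card.
apply/subsetP => _ /imsetP[[[x y] z] /setXP[unwitnessed_xy large_z] ->].
by rewrite in_setC; move: unwitnessed_xy; rewrite inE => /forallP/(_ z)/implyP/(_ large_z).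
Qed.

Local Notation N := (#|T|%:R : R).
Local Notation m := (n%:R : R).

Let card_W : #|{: W}|%:R = N + m :> R.
Proof. by rewrite card_sum card_ord natrD. Qed.

Let N_gt0 : 0 < N.
Proof. by rewrite ltr0n; apply: leq_trans n_le_T. Qed.

Let N_le_2m : N <= 2 * m.
Proof. by rewrite -natrM ler_nat. Qed.

Let m_le_N : m <= N.
Proof. by rewrite ler_nat. Qed.

Lemma card_small_trace_vertices : #|small_trace_vertices|%:R <= s * (N + m).
Proof. by rewrite -card_W; apply: card_small_trace P_part (ltW s_gt0). Qed.

Lemma card_large_trace_centres : N <= 4 * #|large_trace_centres|%:R.
Proof.
have small_centres : #|~: large_trace_centres|%:R <= eps * (N + m).
  rewrite -card_W (_ : ~: large_trace_centres = [set z | ~~ large_trace P inr eps z]).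
    exact: card_small_trace P_part (ltW eps_gt0).
  by apply/setP => z; rewrite !inE.
have := cardsC large_trace_centres; rewrite card_ord => /(congr1 (fun k => k%:R : R)).
rewrite natrD => card_n.
move: small_centres N_le_2m m_le_N eps_le_s s_small eps_gt0; nra.
Qed.

Lemma card_irregular_triples : #|~: regular_triples|%:R <= eps * (N + m) ^+ 3.
Proof.
have := cardsC regular_triples; rewrite !card_prod => /(congr1 (fun k => k%:R : R)).
rewrite natrD !natrM card_W -expr2 -exprSr => S3_sum.
by have := P_reg.2; rewrite natrX card_W; lra.
Qed.

Lemma card_unwitnessed_pairs : #|unwitnessed_pairs|%:R <= 32 * eps * N ^+ 2.
Proof.
have Nm_cube : (N + m) ^+ 3 <= 8 * N ^+ 3.
  apply: le_trans (_ : (2 * N) ^+ 3 <= _); last by rewrite exprMn (_ : 2 ^+ 3 = 8 :> R) // -natrX.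
  by rewrite lerXn2r ?nnegrE ?addr_ge0 ?mulr_ge0 ?ler0n //; move: m_le_N; lra.
set u : R := #|unwitnessed_pairs|%:R; set g : R := #|large_trace_centres|%:R.
have u_g : u * g <= #|~: regular_triples|%:R by rewrite -natrM ler_nat leq_card_unwitnessed_pairs.
have uN : u * N <= 4 * (u * g) by rewrite mulrCA; apply: ler_wpM2l card_large_trace_centres.
have eps_cube : eps * (N + m) ^+ 3 <= eps * (8 * N ^+ 3) by apply: ler_wpM2l Nm_cube; apply: ltW.
have -> : 32 * eps * N ^+ 2 = 4 * (eps * (8 * N ^+ 3)) / N.
  by field; rewrite lt0r_neq0.
rewrite ler_pdivlMr //.
by move: uN u_g card_irregular_triples eps_cube; lra.
Qed.

Lemma card_irregular_pairs : #|~: regular_pairs|%:R <= 36 * s * N ^+ 2.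
Proof.
have := leq_card_irregular_pairs; rewrite -(ler_nat R) natrD !natrM => irregular.
have small_N : #|small_trace_vertices|%:R * N <= s * (2 * N) * N.
  apply: ler_wpM2r; first exact: ltW N_gt0.
  apply: le_trans card_small_trace_vertices _; apply: ler_wpM2l; first exact: ltW s_gt0.
  by move: m_le_N; lra.
have eps_N : eps * N ^+ 2 <= s * N ^+ 2 by apply: ler_wpM2r eps_le_s; rewrite exprn_ge0 ?ler0n.
by move: irregular small_N card_unwitnessed_pairs eps_N; rewrite !expr2; lra.
Qed.

Lemma card_regular_pairs : (1 - 36 * s) * (#|T| ^ 2)%:R <= #|regular_pairs|%:R.
Proof.
have := cardsC regular_pairs; rewrite card_prod => /(congr1 (fun k => k%:R : R)).
by rewrite natrX natrD; move: card_irregular_pairs; lra.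
Qed.

End TracePartition.

Lemma reg_partition2_preimset_partition (P : {set {set W}}) (eps s : R) :
  reg_partition3 (tensor_edges e n) eps P -> 0 < eps -> 0 < s -> eps <= s ^+ 2 ->
  (0 < n)%N -> (n <= #|T|)%N -> (#|T| <= 2 * n)%N ->
  reg_partition2 e (36 * s) (preimset_partition inl P).
Proof.
move=> P_reg eps_gt0 s_gt0 eps_s n_gt0 n_le_T T_le_2n.
split; first exact: partition_preimset_partition P_reg.1.
have [s_small|s_large] := ltrP (36 * s) 1; first exact: (card_regular_pairs _ _ _ P_reg).
by apply: le_trans _ (ler0n _ _); rewrite mulr_le0_ge0 ?ler0n ?subr_le0.
Qed.

End Tensor.

Lemma le_powR_invn_exp (R : realType) (x : R) (j k : nat) :
  0 < x <= 1 -> (0 < k)%N -> (j <= k)%N -> x <= (x `^ k%:R^-1) ^+ j.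
Proof.
move=> x_01 k_gt0 j_le_k; have /andP[x_gt0 _] := x_01.
rewrite -powR_mulrn ?powR_ge0 // -powRrM -[leLHS](powRr1 (ltW x_gt0)).
apply: (ger_powR x_01); rewrite mulrC ler_pdivrMr ?ltr0n // mul1r ler_nat //.
Qed.

Theorem lemma5p3 (R : realType) (T : finType) (U V : {set T}) (e : rel T)
    (eps : R) (t : nat) :
  bipartite U V e -> 0 < eps -> eps < 1 / 3 ->
  (0 < maxn #|U| #|V|)%N ->
  (exists P : {set {set (T + 'I_(maxn #|U| #|V|))}},
      reg_partition3 (tensor_edges e (maxn #|U| #|V|)) eps P /\ #|P| = t) ->
  exists Q : {set {set T}},
    reg_partition2 e (36 * eps `^ (18^-1)) Q /\ (#|Q| <= 2 * t + 2)%N.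
Proof.
move=> [UV_disj [UV_cover [e_sym _]]] eps_gt0 eps_lt n_gt0 [P [P_reg card_P]].
have card_T : #|T| = (#|U| + #|V|)%N.
  by rewrite -cardsT -UV_cover cardsU (disjoint_setI0 UV_disj) cards0 subn0.
exists (preimset_partition inl P); split.
  apply: (@reg_partition2_preimset_partition _ _ _ _ e_sym P eps) => //.
  - exact: powR_gt0.
  - by apply: le_powR_invn_exp; rewrite // eps_gt0; lra.
  - by rewrite card_T geq_max leq_addr leq_addl.
  - by rewrite card_T mul2n -addnn leq_add ?leq_maxl ?leq_maxr.
by apply: leq_trans (card_preimset_partition _ _) _; rewrite card_P; lia.
Qed.
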